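(* Let $(X,\|\cdot\|)$ be a normed linear space over $\mathbb{R}$ or $\mathbb{C}$. Then for all $x,a\in X$, $$\langle x,a\rangle_i\ \ge\ \|a\|\left(\|a\|-\|x-a\|\right).$$ The inequality is sharp: for every $a\in X\setminus\{0\}$ and every $\varepsilon\in(0,1)$, equality holds for $x=\varepsilon a$, both sides being equal to the nonzero number $\varepsilon\|a\|^2$.
   Context: For a normed linear space $(X,\|\cdot\|)$, the inferior semi-inner product is defined for $x,y\in X$ by $\langle x,y\rangle_i:=\lim_{t\to 0^-}\frac{\|y+tx\|^2-\|y\|^2}{2t}$. *)

From HB Require Import structures.
From mathcomp Require Import all_boot all_order all_algebra.
From mathcomp Require Import all_classical all_reals all_analysis.
Set Implicit Arguments. Unset Strict Implicit. Unset Printing Implicit Defensive.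
Import Order.TTheory GRing.Theory Num.Theory.
Import numFieldNormedType.Exports.
Local Open Scope ring_scope.
Local Open Scope classical_set_scope.

Definition sip_i {R : realType} {V : normedModType R} (x y : V) : R :=
  lim ((fun t : R => (`|y + t *: x| ^+ 2 - `|y| ^+ 2) / (2 * t)) @ 0^'-).

From HB Require Import structures.
From mathcomp Require Import all_boot all_order all_algebra.
From mathcomp Require Import all_classical all_reals all_analysis.
From mathcomp Require Import lra ring.
Import Order.TTheory GRing.Theory Num.Theory.
Import numFieldNormedType.Exports.
Local Open Scope ring_scope.
Local Open Scope classical_set_scope.

(* By convexity of the norm, the difference quotient
   q(t) = (||a + t x|| - ||a||) / t is nondecreasing on t < 0, and it is
   bounded by ||x||; hence it converges as t -> 0^-, and <x,a>_i is that limit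
   times ||a|| (factor ||y + t x||^2 - ||y||^2 as a difference of squares).
   Writing a + t x = (1 + t) a + t (x - a) gives q(t) >= ||a|| - ||x - a||
   for -1 < t < 0.  For x = c a the quotient is eventually the constant
   c ||a||. *)

Section NormQuotient.
Context {R : realFieldType} {V : normedModType R}.

Definition norm_quot (x a : V) (t : R) : R := (`|a + t *: x| - `|a|) / t.

Lemma norm_quot_le (x a : V) (s t : R) :
  s <= t -> t < 0 -> norm_quot x a s <= norm_quot x a t.
Proof.
move=> st t0; have s0 : s < 0 by apply: le_lt_trans t0.
have decomp : s *: (a + t *: x) = t *: (a + s *: x) + (s - t) *: a.
  by rewrite !scalerDr !scalerA scalerBl [t * s]mulrC [RHS]addrC addrA subrK.
have : `|s| * `|a + t *: x| <= `|t| * `|a + s *: x| + `|s - t| * `|a|.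
  by rewrite -!normrZ decomp ler_normD.
rewrite ltr0_norm // ltr0_norm // ler0_norm ?subr_le0 // => convex.
by rewrite /norm_quot ler_ndivrMr // mulrAC ler_ndivrMr //; nra.
Qed.

Lemma norm_quot_le_norm (x a : V) (t : R) : t < 0 -> norm_quot x a t <= `|x|.
Proof.
move=> t0; rewrite /norm_quot ler_ndivrMr //.
have : `|a| <= `|a + t *: x| + `|t| * `|x|.
  by rewrite -normrZ -{1}[a](addrK (t *: x)) ler_normB.
by rewrite ltr0_norm //; nra.
Qed.

Lemma norm_quot_ge (x a : V) (t : R) :
  -1 < t -> t < 0 -> `|a| - `|x - a| <= norm_quot x a t.
Proof.
move=> t_gt t0; rewrite /norm_quot ler_ndivlMr //.
have -> : a + t *: x = (1 + t) *: a + t *: (x - a).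
  by rewrite scalerDl scale1r scalerBr -addrA [t *: a + _]addrCA subrr addr0.
have : `|(1 + t) *: a + t *: (x - a)| <= (1 + t) * `|a| + (- t) * `|x - a|.
  rewrite (le_trans (ler_normD _ _)) // !normrZ ger0_norm ?ltr0_norm //.
  lra.
nra.
Qed.

Lemma norm_quot_scale (a : V) (c t : R) :
  t != 0 -> 0 <= 1 + t * c -> norm_quot (c *: a) a t = c * `|a|.
Proof.
move=> t0 tc; rewrite /norm_quot scalerA.
have -> : a + (t * c) *: a = (1 + t * c) *: a by rewrite scalerDl scale1r.
by rewrite normrZ ger0_norm //; field.
Qed.

Lemma sqr_norm_quotE (x a : V) (t : R) :
  (`|a + t *: x| ^+ 2 - `|a| ^+ 2) / (2 * t) =
  norm_quot x a t * ((`|a + t *: x| + `|a|) / 2).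
Proof. by rewrite /norm_quot invfM subr_sqr; ring. Qed.

End NormQuotient.

Section InferiorSemiInnerProduct.
Context {R : realType} {V : normedModType R}.

Lemma is_cvg_norm_quot (x a : V) : cvg (norm_quot x a t @[t --> 0^'-]).
Proof.
apply: nondecreasing_at_left_is_cvgr.
- near=> s => u v; rewrite !in_itv /= => /andP[_ u0] /andP[_ v0] uv.
  exact: norm_quot_le.
- near=> s; exists `|x| => q [t]; rewrite /= in_itv /= => /andP[_ t0] <-.
  exact: norm_quot_le_norm.
Unshelve. all: by end_near. Qed.

Lemma cvg_norm_add_scale (x a : V) : `|a + t *: x| @[t --> 0^'-] --> `|a|.
Proof.
apply: cvg_at_left_filter; rewrite -{2}[a]addr0 -(scale0r x).
exact: cvg_norm (cvgD (cvg_cst _) (cvgZr_tmp cvg_id)).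
Qed.

Lemma sip_iE (x a : V) : sip_i x a = lim (norm_quot x a t @[t --> 0^'-]) * `|a|.
Proof.
rewrite /sip_i (funext (sqr_norm_quotE x a)).
have mean : (`|a + t *: x| + `|a|) / 2 @[t --> 0^'-] --> (`|a| + `|a|) / 2.
  exact: cvgM (cvgD (cvg_norm_add_scale x a) (cvg_cst _)) (cvg_cst _).
rewrite [X in _ = _ * X](_ : _ = (`|a| + `|a|) / 2); last by rewrite mulrDl -splitr.
exact/cvg_lim/(cvgM (is_cvg_norm_quot x a) mean).
Qed.

Lemma sip_i_ge (x a : V) : `|a| * (`|a| - `|x - a|) <= sip_i x a.
Proof.
rewrite sip_iE mulrC ler_wpM2r // limr_ge //; first exact: is_cvg_norm_quot.
near=> t; apply: norm_quot_ge.
- by near: t; apply: nbhs_left_gt; lra.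
- by near: t; exact: nbhs_left_lt.
Unshelve. all: by end_near. Qed.

Lemma sip_i_scale (a : V) (c : R) : sip_i (c *: a) a = c * `|a| ^+ 2.
Proof.
rewrite sip_iE expr2 mulrA; congr (_ * _); apply: cvg_lim => //.
apply: cvg_near_cst.
have lin : 1 + t * c @[t --> 0^'-] --> 1 + 0 * c.
  apply: cvg_at_left_filter; apply: cvgD; first exact: cvg_cst.
  by apply: cvgMr_tmp; exact: cvg_id.
near=> t; apply: norm_quot_scale.
- by rewrite lt_eqF //; near: t; exact: nbhs_left_lt.
- apply: ltW; near: t; apply: cvgr_gt lin _ _; by rewrite mul0r addr0.
Unshelve. all: by end_near. Qed.

End InferiorSemiInnerProduct.

Theorem lemma2p2 (R : realType) (V : normedModType R) :
  (forall x a : V, `|a| * (`|a| - `|x - a|) <= sip_i x a) /\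
  (forall (a : V) (eps : R), a != 0 -> 0 < eps < 1 ->
     sip_i (eps *: a) a = `|a| * (`|a| - `|eps *: a - a|) /\
     sip_i (eps *: a) a = eps * `|a| ^+ 2 /\
     eps * `|a| ^+ 2 != 0).
Proof.
split; first exact: sip_i_ge.
move=> a eps a0 /andP[eps0 eps1]; rewrite sip_i_scale.
split; last by rewrite mulf_neq0 ?expf_neq0 ?normr_eq0 // gt_eqF.
rewrite -[X in _ *: a - X]scale1r -scalerBl normrZ ler0_norm; last by lra.
ring.
Qed.
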